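(* Assume $b,f,g$ are bounded and uniformly continuous in all variables. If $A$ is compact, then $\mathbb H(\theta)=\mathbb H_0(\theta)$ for all $\theta\in\mathbb X$.
   Context: Fix integers $d,N\ge 1$ and $T>0$. For $i=1,\dots,N$, $A_i$ is a domain in some Euclidean space and $A:=A_1\times\cdots\times A_N$. For $a\in A$ and $\tilde a_i\in A_i$, $(a^{-i},\tilde a_i)$ denotes $a$ with its $i$-th component replaced by $\tilde a_i$. Data: $b:[0,T]\times\mathbb R^d\times A\to\mathbb R^d$, $f:[0,T]\times\mathbb R^d\times A\to\mathbb R^N$, $g:\mathbb R^d\to\mathbb R^N$. Let $\mathbb X:=[0,T]\times\mathbb R^d\times\mathbb R^{dN}$ with elements $\theta=(t,x,z)$, $z=(z^1,\dots,z^N)$, $z^i\in\mathbb R^d$, and $\theta^i:=(t,x,z^i)$. Set $h_i(t,x,z^i,a):=f_i(t,x,a)+b(t,x,a)\cdot z^i$ and $h(\theta,a):=(h_1(\theta^1,a),\dots,h_N(\theta^N,a))$. For $\varepsilon\ge 0$, $\mathcal E_\varepsilon(\theta)$ is the set of $a\in A$ with $h_i(\theta^i,a)\ge h_i(\theta^i,(a^{-i},\tilde a_i))-\varepsilon$ for all $i$ and all $\tilde a_i\in A_i$; $\mathcal E(\theta):=\mathcal E_0(\theta)$. Define $\mathbb H_0(\theta):=\{h(\theta,a^* ):a^*\in\mathcal E(\theta)\}$, $\mathbb H_\varepsilon(\theta):=\{y\in\mathbb R^N:|y-h(\theta,a)|<\varepsilon\text{ for some }a\in\mathcal E_\varepsilon(\theta)\}$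 for $\varepsilon>0$, and $\mathbb H(\theta):=\bigcap_{\varepsilon>0}\mathbb H_\varepsilon(\theta)$. *)

From HB Require Import structures.
From mathcomp Require Import all_boot all_order all_algebra.
From mathcomp Require Import all_classical all_reals all_analysis.
Unset Printing Implicit Defensive.
Import Order.TTheory GRing.Theory Num.Theory.
Import numFieldNormedType.Exports.
Local Open Scope classical_set_scope.
Local Open Scope ring_scope.

Section Game.
Variable R : realType.

Definition dotv {n : nat} (u v : 'rV[R]_n) : R := \sum_(j < n) u 0 j * v 0 j.
Definition euclid {n : nat} (u : 'rV[R]_n) : R := Num.sqrt (\sum_(j < n) u 0 j ^+ 2).

Variables (d N : nat) (m : 'I_N -> nat).

Definition prof := forall i : 'I_N, 'rV[R]_(m i).

Variable Aset : forall i : 'I_N, set 'rV[R]_(m i).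

Definition Aprod : set prof := [set a | forall i, Aset i (a i)].

Variables (b : R -> 'rV[R]_d -> prof -> 'rV[R]_d)
          (f : R -> 'rV[R]_d -> prof -> 'rV[R]_N).

Definition hi (t : R) (x : 'rV[R]_d) (z : 'I_N -> 'rV[R]_d) (i : 'I_N) (a : prof) : R :=
  f t x a 0 i + dotv (b t x a) (z i).

Definition hvec t x z (a : prof) : 'rV[R]_N := \row_(i < N) hi t x z i a.

(* E_eps(theta); (a^{-i}, at) is  dfwith a at *)
Definition Eeps (eps : R) t x z : set prof :=
  [set a | Aprod a /\ forall (i : 'I_N) (ai : 'rV[R]_(m i)), Aset i ai ->
       hi t x z i (@dfwith _ (fun j : 'I_N => 'rV[R]_(m j)) a i ai) - eps <= hi t x z i a].

Definition H0 t x z : set 'rV[R]_N :=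
  [set y | exists a, Eeps 0 t x z a /\ y = hvec t x z a].

Definition Heps (eps : R) t x z : set 'rV[R]_N :=
  [set y | exists a, Eeps eps t x z a /\ euclid (y - hvec t x z a) < eps].

Definition Hset t x z : set 'rV[R]_N :=
  [set y | forall eps : R, 0 < eps -> Heps eps t x z y].

End Game.

Arguments prof R {N} m.
Arguments Aprod {R N m} Aset.
Arguments hi {R d N m} b f t x z i a.
Arguments hvec {R d N m} b f t x z a.
Arguments Eeps {R d N m} Aset b f eps t x z.
Arguments H0 {R d N m} Aset b f t x z.
Arguments Heps {R d N m} Aset b f eps t x z.
Arguments Hset {R d N m} Aset b f t x z.

Definition bounded_on_TxA (R : realType) (d N n : nat) (m : 'I_N -> nat)
  (Aset : forall i : 'I_N, set 'rV[R]_(m i)) (T : R)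
  (phi : R -> 'rV[R]_d -> prof R m -> 'rV[R]_n) : Prop :=
  exists M : R, forall t x a, 0 <= t <= T -> Aprod Aset a -> `|phi t x a| <= M.

Definition unif_cont_on_TxA (R : realType) (d N n : nat) (m : 'I_N -> nat)
  (Aset : forall i : 'I_N, set 'rV[R]_(m i)) (T : R)
  (phi : R -> 'rV[R]_d -> prof R m -> 'rV[R]_n) : Prop :=
  forall e : R, 0 < e -> exists2 del : R, 0 < del &
    forall t t' x x' a a', 0 <= t <= T -> 0 <= t' <= T ->
      Aprod Aset a -> Aprod Aset a' ->
      `|t - t'| < del -> `|x - x'| < del -> (forall i, `|a i - a' i| < del) ->
      `|phi t x a - phi t' x' a'| < e.

Arguments bounded_on_TxA {R d N n m} Aset T phi.
Arguments unif_cont_on_TxA {R d N n m} Aset T phi.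

From HB Require Import structures.
From mathcomp Require Import all_boot all_order all_algebra.
From mathcomp Require Import all_classical all_reals all_analysis.
From mathcomp Require Import lra.
Import Order.TTheory GRing.Theory Num.Theory.
Import numFieldNormedType.Exports.
Local Open Scope classical_set_scope.
Local Open Scope ring_scope.

(* If y lies in every H_eps, choose a_n in E_{1/(n+1)} with |y - h(a_n)| < 1/(n+1).
   Compactness of A gives a cluster point a' of (a_n) in A. Each h_i is uniformly
   continuous in the action profile, uniformly in the deviation of player i, so along
   indices n where a_n is close to a' both the approximate equilibrium inequalities and
   the approximation of y pass to the limit: a' is a Nash equilibrium and y = h(a'). *)

Lemma mx_norm_coord_le {R : realDomainType} {p q : nat} (M : 'M[R]_(p, q)) i j :
  `|M i j| <= `|M|.
Proof. by rewrite [`|M|]mx_normrE; exact: (le_bigmax _ _ (i, j)). Qed.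

Lemma euclid_coord_le {R : realType} {n : nat} (w : 'rV[R]_n) i : `|w 0 i| <= euclid R w.
Proof.
rewrite /euclid -sqrtr_sqr ler_sqrt; last by apply: sumr_ge0 => k _; exact: sqr_ge0.
by rewrite (bigD1 i) //= lerDl; apply: sumr_ge0 => k _; exact: sqr_ge0.
Qed.

Lemma dotvBl {R : realType} {n : nat} (u v w : 'rV[R]_n) :
  dotv R u w - dotv R v w = dotv R (u - v) w.
Proof. by rewrite /dotv -sumrB; apply: eq_bigr => k _; rewrite !mxE mulrBl. Qed.

Lemma dotv_norm_le {R : realType} {n : nat} (u w : 'rV[R]_n) :
  `|dotv R u w| <= `|u| * \sum_k `|w 0 k|.
Proof.
rewrite /dotv mulr_sumr; apply: le_trans (ler_norm_sum _ _ _) _.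
by apply: ler_sum => k _; rewrite normrM ler_wpM2r // mx_norm_coord_le.
Qed.

Lemma nbhs_prod_norm_lt {K : numFieldType} {I : finType} {V : I -> normedModType K}
  (l : prod_topology V) {del : K} : 0 < del ->
  nbhs l [set u : prod_topology V | forall i, `|u i - l i| < del].
Proof.
move=> del0.
apply: (@filter_forall _ _ (fun i => [set u : prod_topology V | `|u i - l i| < del])
  (nbhs l) _) => i.
have li_nbhs : nbhs (l i) [set v : V i | `|v - l i| < del].
  by apply/nbhs_ballP; exists del => //= v; rewrite -ball_normE /= distrC.
exact: (@proj_continuous I V i l _ li_nbhs).
Qed.

Lemma cluster_seq_meets {T : topologicalType} {u : nat -> T} {l : T}
    {P : set nat} {Q : set T} :
  cluster (u @ \oo) l -> (\forall n \near \oo, P n) -> nbhs l Q -> exists n, P n /\ Q (u n).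
Proof.
move=> ul nP lQ.
have uP : (u @ \oo) (u @` P) by apply: filterS nP => n Pn; exists n.
have [_ [[n Pn <-] Qun]] := ul _ _ uP lQ.
by exists n.
Qed.

Definition unif_cont_on_A {R : realType} {N : nat} {m : 'I_N -> nat}
  (Aset : forall i : 'I_N, set 'rV[R]_(m i)) (phi : prof R m -> R) : Prop :=
  forall e : R, 0 < e -> exists2 del : R, 0 < del &
    forall a a', Aprod Aset a -> Aprod Aset a' -> (forall i, `|a i - a' i| < del) ->
      `|phi a - phi a'| < e.

Section UniformContinuityOnA.
Variables (R : realType) (N : nat) (m : 'I_N -> nat).
Variable Aset : forall i : 'I_N, set 'rV[R]_(m i).

Lemma unif_cont_on_AD (phi psi : prof R m -> R) :
  unif_cont_on_A Aset phi -> unif_cont_on_A Aset psi ->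
  unif_cont_on_A Aset (fun a => phi a + psi a).
Proof.
move=> phi_uc psi_uc e e0.
have e2 : 0 < e / 2 by rewrite divr_gt0.
have [d1 d1_gt0 d1P] := phi_uc _ e2.
have [d2 d2_gt0 d2P] := psi_uc _ e2.
exists (Num.min d1 d2) => [|a a' Aa Aa' aa']; first by rewrite lt_min d1_gt0 d2_gt0.
have phi_close : `|phi a - phi a'| < e / 2.
  by apply: d1P => // i; have := aa' i; rewrite lt_min => /andP[].
have psi_close : `|psi a - psi a'| < e / 2.
  by apply: d2P => // i; have := aa' i; rewrite lt_min => /andP[].
rewrite opprD addrACA; apply: le_lt_trans (ler_normD _ _) _.
by rewrite [e](splitr e) ltrD.
Qed.

Lemma unif_cont_on_A_lipschitz_comp {d n : nat} {T t : R} {x : 'rV[R]_d}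
  {Phi : R -> 'rV[R]_d -> prof R m -> 'rV[R]_n} (phi : 'rV[R]_n -> R) (C : R) :
  unif_cont_on_TxA Aset T Phi -> 0 <= t <= T -> 0 < C ->
  (forall u v, `|phi u - phi v| <= C * `|u - v|) ->
  unif_cont_on_A Aset (fun a => phi (Phi t x a)).
Proof.
move=> Phi_uc tT C0 phi_lip e e0.
have [del del0 delP] := Phi_uc _ (divr_gt0 e0 C0).
exists del => // a a' Aa Aa' aa'.
have := delP t t x x a a' tT tT Aa Aa'.
rewrite !subrr !normr0 => /(_ del0 del0 aa') Phi_close.
by apply: le_lt_trans (phi_lip _ _) _; rewrite -ltr_pdivlMl // mulrC.
Qed.

Lemma unif_cont_on_A_hi (d : nat) (T t : R) (x : 'rV[R]_d) (z : 'I_N -> 'rV[R]_d) i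
  (b : R -> 'rV[R]_d -> prof R m -> 'rV[R]_d) (f : R -> 'rV[R]_d -> prof R m -> 'rV[R]_N) :
  unif_cont_on_TxA Aset T b -> unif_cont_on_TxA Aset T f -> 0 <= t <= T ->
  unif_cont_on_A Aset (hi b f t x z i).
Proof.
move=> b_uc f_uc tT; apply: unif_cont_on_AD.
  apply: (unif_cont_on_A_lipschitz_comp (fun u => u 0 i) 1 f_uc) => // u v.
  by rewrite mul1r; have := mx_norm_coord_le (u - v) 0 i; rewrite !mxE.
have S_ge0 : 0 <= \sum_k `|z i 0 k| by apply: sumr_ge0 => k _.
apply: (unif_cont_on_A_lipschitz_comp (dotv R ^~ (z i)) (\sum_k `|z i 0 k| + 1) b_uc)
  => // [|u v].
  by rewrite ltr_wpDl.
rewrite dotvBl mulrC; apply: le_trans (dotv_norm_le _ _) _.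
by rewrite ler_wpM2l // lerDl.
Qed.

End UniformContinuityOnA.

Lemma Aprod_dfwith {R : realType} {N : nat} {m : 'I_N -> nat}
  (Aset : forall i : 'I_N, set 'rV[R]_(m i)) (a : prof R m) i (ai : 'rV[R]_(m i)) :
  Aprod Aset a -> Aset i ai -> Aprod Aset (dfwith a i ai).
Proof. by move=> Aa Ai j; case: dfwithP. Qed.

Lemma Eeps_le {R : realType} {d N : nat} {m : 'I_N -> nat}
  (Aset : forall i : 'I_N, set 'rV[R]_(m i)) (b : R -> 'rV[R]_d -> prof R m -> 'rV[R]_d)
  (f : R -> 'rV[R]_d -> prof R m -> 'rV[R]_N) t x z (eps eps' : R) :
  eps <= eps' -> Eeps Aset b f eps t x z `<=` Eeps Aset b f eps' t x z.
Proof.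
move=> le_eps a [Aa aE]; split => // i ai Ai.
by apply: le_trans (aE i ai Ai); rewrite lerD2l lerN2.
Qed.

Lemma H0_sub_Hset {R : realType} {d N : nat} {m : 'I_N -> nat}
  (Aset : forall i : 'I_N, set 'rV[R]_(m i)) (b : R -> 'rV[R]_d -> prof R m -> 'rV[R]_d)
  (f : R -> 'rV[R]_d -> prof R m -> 'rV[R]_N) t x z :
  H0 Aset b f t x z `<=` Hset Aset b f t x z.
Proof.
move=> _ [a [aE ->]] e e0; exists a; split; first exact: Eeps_le (ltW e0) _ aE.
by rewrite subrr /euclid big1 ?sqrtr0 // => k _; rewrite mxE expr0n.
Qed.

Section ClusterOfApproximateEquilibria.
Variables (R : realType) (d N : nat) (m : 'I_N -> nat).
Variable Aset : forall i : 'I_N, set 'rV[R]_(m i).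
Variables (b : R -> 'rV[R]_d -> prof R m -> 'rV[R]_d)
  (f : R -> 'rV[R]_d -> prof R m -> 'rV[R]_N).
Variables (t : R) (x : 'rV[R]_d) (z : 'I_N -> 'rV[R]_d).
Hypothesis hi_uc : forall i, unif_cont_on_A Aset (hi b f t x z i).

Local Notation profT := (prod_topology (fun i : 'I_N => 'rV[R]_(m i))).

Variables (a : nat -> profT) (astar : profT).
Hypotheses (Aa : forall n, Aprod Aset (a n)) (Aastar : Aprod Aset astar).
Hypothesis astar_cluster : cluster (a @ \oo) astar.

Lemma cluster_hi_close i (e : R) : 0 < e -> exists n, n.+1%:R^-1 < e /\
  `|hi b f t x z i (a n) - hi b f t x z i astar| < e /\
  forall ai, Aset i ai ->
    `|hi b f t x z i (dfwith (a n) i ai) - hi b f t x z i (dfwith astar i ai)| < e.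
Proof.
move=> e0; have [del del0 delP] := hi_uc i _ e0.
have [n [n_inv an_close]] := cluster_seq_meets astar_cluster
  (near_infty_natSinv_lt (PosNum e0)) (nbhs_prod_norm_lt astar del0).
exists n; split => //; split; first exact: delP.
move=> ai Ai; apply: delP; [exact: Aprod_dfwith | exact: Aprod_dfwith | move=> j].
case: (eqVneq i j) => [<-|ij]; last by rewrite !dfwithout //; exact: an_close.
by rewrite !dfwithin subrr normr0.
Qed.

Lemma cluster_hvec (y : 'rV[R]_N) :
  (forall n, euclid R (y - hvec b f t x z (a n)) < n.+1%:R^-1) ->
  y = hvec b f t x z astar.
Proof.
move=> y_approx; apply/rowP => i; apply/eqP; rewrite -subr_eq0 -normr_le0.
apply/ler_addgt0Pr => e e0; rewrite add0r.
have e2 : 0 < e / 2 by rewrite divr_gt0.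
have [n [n_inv [an_close _]]] := cluster_hi_close i (e / 2) e2.
have y_close := le_lt_trans (euclid_coord_le _ i) (y_approx n).
rewrite !mxE in y_close *.
rewrite -(subrKA (hi b f t x z i (a n))); apply: ltW; apply: le_lt_trans (ler_normD _ _) _.
by rewrite [e](splitr e) ltrD // (lt_trans y_close).
Qed.

Lemma cluster_Eeps0 :
  (forall n, Eeps Aset b f n.+1%:R^-1 t x z (a n)) -> Eeps Aset b f 0 t x z astar.
Proof.
move=> an_eq; split => // i ai Ai; rewrite subr0.
apply/ler_addgt0Pr => e e0.
have e3 : 0 < e / 3 by rewrite divr_gt0.
have [n [n_inv [an_close dev_close]]] := cluster_hi_close i (e / 3) e3.
move: an_close (dev_close ai Ai); rewrite !ltr_norml => /andP[_ an_up] /andP[dev_lo _].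
(* lra does not treat n.+1%:R^-1 as an atom, so it is abstracted first. *)
move: n_inv ((an_eq n).2 i ai Ai); move: (n.+1%:R^-1 : R) => eps.
lra.
Qed.

End ClusterOfApproximateEquilibria.

Arguments cluster_hvec {R d N m Aset b f t x z} hi_uc {a astar} Aa Aastar astar_cluster y.
Arguments cluster_Eeps0 {R d N m Aset b f t x z} hi_uc {a astar} Aa Aastar astar_cluster.

Lemma Hset_sub_H0 {R : realType} {d N : nat} {m : 'I_N -> nat}
  (Aset : forall i : 'I_N, set 'rV[R]_(m i)) (b : R -> 'rV[R]_d -> prof R m -> 'rV[R]_d)
  (f : R -> 'rV[R]_d -> prof R m -> 'rV[R]_N) t x z :
  @compact (prod_topology (fun i : 'I_N => 'rV[R]_(m i))) (Aprod Aset) ->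
  (forall i, unif_cont_on_A Aset (hi b f t x z i)) ->
  Hset Aset b f t x z `<=` H0 Aset b f t x z.
Proof.
move=> A_compact hi_uc y y_lim.
have /choice[a a_approx] : forall n, exists a, Eeps Aset b f n.+1%:R^-1 t x z a /\
    euclid R (y - hvec b f t x z a) < n.+1%:R^-1.
  by move=> n; apply: y_lim; rewrite invr_gt0 ltr0n.
have Aa n : Aprod Aset (a n) by have [[]] := a_approx n.
have aA : (a @ \oo : set_system (prod_topology _)) (Aprod Aset).
  by exists 0%N => // n _; exact: Aa.
have [astar [Aastar astar_cluster]] := A_compact _ _ aA.
exists astar; split.
  by apply: (cluster_Eeps0 hi_uc Aa Aastar astar_cluster) => n; have [] := a_approx n.
by apply: (cluster_hvec hi_uc Aa Aastar astar_cluster) => n; have [] := a_approx n.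
Qed.

Theorem proposition2p6 (R : realType) (d N : nat) (hd : (1 <= d)%N) (hN : (1 <= N)%N)
  (T : R) (hT : 0 < T) (m : 'I_N -> nat) (Aset : forall i : 'I_N, set 'rV[R]_(m i))
  (b : R -> 'rV[R]_d -> prof R m -> 'rV[R]_d)
  (f : R -> 'rV[R]_d -> prof R m -> 'rV[R]_N)
  (g : 'rV[R]_d -> 'rV[R]_N) :
  bounded_on_TxA Aset T b -> unif_cont_on_TxA Aset T b ->
  bounded_on_TxA Aset T f -> unif_cont_on_TxA Aset T f ->
  (exists M : R, forall x, `|g x| <= M) ->
  (forall e : R, 0 < e -> exists2 del : R, 0 < del &
     forall x x', `|x - x'| < del -> `|g x - g x'| < e) ->
  @compact (prod_topology (fun i : 'I_N => 'rV[R]_(m i))) (Aprod Aset) ->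
  forall (t : R) (x : 'rV[R]_d) (z : 'I_N -> 'rV[R]_d), 0 <= t <= T ->
    Hset Aset b f t x z = H0 Aset b f t x z.
Proof.
move=> _ b_uc _ f_uc _ _ A_compact t x z tT.
apply/seteqP; split; last exact: H0_sub_Hset.
apply: Hset_sub_H0 A_compact _ => i.
exact: unif_cont_on_A_hi b_uc f_uc tT.
Qed.
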